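(* Let $a,b$ be integers with $0<b<a$, let $S=\langle a,a+1,\ldots,a+b\rangle$ with conductor $c$, and let $m\ge 2c-1$. Let $q$ be a nonnegative integer and $j\in\{0,\ldots,a-1\}$. Then $$\mathrm D(m,m+qa+j)=\mathrm D(m)\cup\Big\{m-(ka+r)\ \Big|\ 0\le r\le a-j-1,\ \tfrac{r+j}{b}-q\le k<\tfrac{r}{b}\Big\}\cup\Big\{m-(ka+r)\ \Big|\ a-j\le r\le a-1,\ \tfrac{r+j-(a+b)}{b}-q\le k<\tfrac{r}{b}\Big\},$$ where $k,r$ range over integers, and this union is disjoint.
   Context: The conductor $c$ of a numerical semigroup $S$ is the least element of $S$ with $c+n\in S$ for all $n\in\mathbb N$. For $x\in S$, $\mathrm D(x)=\{\alpha\in S\mid x-\alpha\in S\}$, and $\mathrm D(x_1,\ldots,x_t)=\mathrm D(x_1)\cup\cdots\cup\mathrm D(x_t)$. *)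

From mathcomp Require Import all_boot all_order all_algebra.
Set Implicit Arguments. Unset Strict Implicit. Unset Printing Implicit Defensive.
Import Order.TTheory GRing.Theory Num.Theory.
Local Open Scope ring_scope.

Inductive inS (a b : int) : int -> Prop :=
  | inS0 : inS a b 0
  | inS_add (x i : int) : inS a b x -> 0 <= i -> i <= b -> inS a b (x + (a + i)).

Definition is_conductor (S : int -> Prop) (c : int) : Prop :=
  [/\ S c, (forall n : nat, S (c + n%:Z)) &
      (forall c', S c' -> (forall n : nat, S (c' + n%:Z)) -> c <= c')].

Definition Dset (S : int -> Prop) (x : int) : int -> Prop :=
  fun alpha => S alpha /\ S (x - alpha).

Definition Dset2 (S : int -> Prop) (x1 x2 : int) : int -> Prop :=
  fun alpha => Dset S x1 alpha \/ Dset S x2 alpha.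

Definition ratz (z : int) : rat := z%:~R.

Definition setA (a b m q j : int) : int -> Prop :=
  fun x => exists k r : int, x = m - (k * a + r) /\
    [/\ 0 <= r, r <= a - j - 1,
        ratz (r + j) / ratz b - ratz q <= ratz k & ratz k < ratz r / ratz b].

Definition setB (a b m q j : int) : int -> Prop :=
  fun x => exists k r : int, x = m - (k * a + r) /\
    [/\ a - j <= r, r <= a - 1,
        ratz (r + j - (a + b)) / ratz b - ratz q <= ratz k &
        ratz k < ratz r / ratz b].

From Pilot Require Import Defs.
From mathcomp Require Import all_boot all_order all_algebra.
From mathcomp Require Import zify ring.
From Stdlib Require Import Classical.
Import Order.TTheory GRing.Theory Num.Theory.
Local Open Scope ring_scope.

(* Writing y = k a + r with 0 <= r < a, one has y \in S iff r <= k b.  Every y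
   outside S satisfies y < c, so m - y >= m - c + 1 >= c lies in S: hence
   D(m, m+qa+j) \ D(m) consists of the x = m - y with y \notin S and
   y + qa + j \in S.  Adding qa + j to y = ka + r gives (k+q)a + (r+j) when
   r + j < a and (k+q+1)a + (r+j-a) otherwise, and the criterion above turns
   these two cases into the two displayed sets, which are distinguished by the
   remainder r. *)

Lemma inS_bounds (a b x : int) : 0 <= b ->
  inS a b x <-> exists n : nat, n%:Z * a <= x <= n%:Z * (a + b).
Proof.
move=> b_ge0; split.
  elim=> [|y i _ [n hn] i_ge0 i_leb]; first by exists 0%N; rewrite !mul0r lexx.
  by exists n.+1; rewrite intS; nia.
case=> n; elim: n x => [|n IHn] x hx.
  have -> : x = 0 by move: hx; rewrite !mul0r; lia.
  exact: inS0.
have [r_leb | b_ltr] := lerP (x - n.+1%:Z * a) b.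
  have -> : x = (x - a - (x - n.+1%:Z * a)) + (a + (x - n.+1%:Z * a)) by ring.
  apply: inS_add; [apply: IHn|..]; rewrite intS in hx r_leb *; nia.
have -> : x = (x - a - b) + (a + b) by ring.
apply: inS_add; [apply: IHn|..]; rewrite intS in hx b_ltr *; nia.
Qed.

Lemma inS_divmod (a b k r : int) : 0 < b -> 0 <= r < a ->
  inS a b (k * a + r) <-> r <= k * b.
Proof.
move=> b_gt0 r_bounds; rewrite inS_bounds; last by lia.
split=> [[n hn] | r_lekb].
  have n_lek : n%:Z <= k by nia.
  have : n%:Z * (a + b) <= k * (a + b) by apply: ler_wpM2r; lia.
  nia.
case: k r_lekb => n r_lekb; first by exists n; nia.
by rewrite NegzE in r_lekb; nia.
Qed.

Lemma divz_rem_inj (a k r k' r' : int) : 0 <= r < a -> 0 <= r' < a ->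
  k * a + r = k' * a + r' -> r = r'.
Proof.
move=> r_bounds r'_bounds e.
by rewrite -(modz_small r_bounds) -(modz_small r'_bounds) -(modzMDl k) e modzMDl.
Qed.

Lemma conductor_le (S : int -> Prop) (c z : int) :
  is_conductor S c -> c <= z -> S z.
Proof.
case=> _ Sc_shift _ c_lez.
by have -> : z = c + (`|z - c|%N)%:Z by lia.
Qed.

Lemma conductor_reflect (S : int -> Prop) (c m y : int) :
  is_conductor S c -> 2 * c - 1 <= m -> ~ S y -> S (m - y).
Proof.
move=> cond hm y_notin.
have [y_ltc | c_ley] := ltrP y c; first by apply: (conductor_le _ _ _ cond); lia.
by case: y_notin; apply: (conductor_le _ _ _ cond).
Qed.

Lemma Dset2_split (S : int -> Prop) (m m' x : int) :
  (forall y, ~ S y -> S (m - y)) ->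
  Dset2 S m m' x <-> Dset S m x \/ (~ S (m - x) /\ S (m' - x)).
Proof.
move=> reflect_m; split.
  case=> [Dx | [Sx Sm'x]]; first by left.
  by have [|] := classic (S (m - x)); [left | right].
case=> [Dx | [mx_notin Sm'x]]; first by left.
by right; split=> //; have := reflect_m _ mx_notin; rewrite subKr.
Qed.

(* Qualified names: rat.v exports its own [ratz], which shadows Defs.ratz. *)
Lemma ratz_divB_le (u v k b : int) : 0 < b ->
  (Defs.ratz u / Defs.ratz b - Defs.ratz v <= Defs.ratz k) <-> u <= (k + v) * b.
Proof.
by move=> b_gt0; rewrite /Defs.ratz lerBlDr ler_pdivrMr ?ltr0z // -intrD -intrM ler_int.
Qed.

Lemma ratz_div_lt (k r b : int) : 0 < b ->
  (Defs.ratz k < Defs.ratz r / Defs.ratz b) <-> k * b < r.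
Proof. by move=> b_gt0; rewrite /Defs.ratz ltr_pdivlMr ?ltr0z // -intrM ltr_int. Qed.

Section SetsAB.

Variables a b m q j : int.
Hypotheses (b_gt0 : 0 < b) (j_ge0 : 0 <= j) (j_lta : j <= a - 1).

Lemma setAE x : setA a b m q j x <->
  exists k r, x = m - (k * a + r) /\
    [/\ 0 <= r, r <= a - j - 1, r + j <= (k + q) * b & k * b < r].
Proof.
split=> -[k [r [-> [h1 h2 h3 h4]]]]; exists k, r; split=> //; split=> //.
- by rewrite -ratz_divB_le.
- by rewrite -ratz_div_lt.
- by rewrite ratz_divB_le.
- by rewrite ratz_div_lt.
Qed.

Lemma setBE x : setB a b m q j x <->
  exists k r, x = m - (k * a + r) /\
    [/\ a - j <= r, r <= a - 1, r + j - a <= (k + q + 1) * b & k * b < r].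
Proof.
split=> -[k [r [-> [h1 h2 h3 h4]]]]; exists k, r; split=> //; split=> //.
- by move: h3; rewrite ratz_divB_le //; lia.
- by rewrite -ratz_div_lt.
- by rewrite ratz_divB_le //; lia.
- by rewrite ratz_div_lt.
Qed.

Lemma setAB_iff x : setA a b m q j x \/ setB a b m q j x <->
  ~ inS a b (m - x) /\ inS a b (m - x + (q * a + j)).
Proof.
rewrite setAE setBE; split.
  case=> -[k [r [-> [h1 h2 h3 h4]]]]; rewrite subKr.
  - rewrite (_ : k * a + r + (q * a + j) = (k + q) * a + (r + j)); last by ring.
    by rewrite !inS_divmod //; [split; lia | lia | lia].
  - rewrite (_ : k * a + r + (q * a + j) = (k + q + 1) * a + (r + j - a)); last by ring.
    by rewrite !inS_divmod //; [split; lia | lia | lia].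
set y := m - x => -[y_notin Sy_shift].
have x_def : x = m - y by rewrite /y; ring.
have y_def := divz_eq y a; set k := (y %/ a)%Z in y_def; set r := (y %% a)%Z in y_def.
have r_bounds : 0 <= r < a by rewrite modz_ge0 ?ltz_pmod //; lia.
have kb_ltr : k * b < r.
  by rewrite ltNge; apply/negP => r_lekb; apply: y_notin; rewrite y_def inS_divmod.
move: Sy_shift; rewrite {1}y_def.
have [r_small | r_large] := lerP r (a - j - 1).
  rewrite (_ : k * a + r + (q * a + j) = (k + q) * a + (r + j)); last by ring.
  rewrite inS_divmod //; last by lia.
  by left; exists k, r; split; [rewrite x_def {1}y_def | split; lia].
rewrite (_ : k * a + r + (q * a + j) = (k + q + 1) * a + (r + j - a)); last by ring.
rewrite inS_divmod //; last by lia.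
by right; exists k, r; split; [rewrite x_def {1}y_def | split; lia].
Qed.

Lemma setA_setB_disjoint x : setA a b m q j x -> ~ setB a b m q j x.
Proof.
rewrite setAE setBE => -[k [r [-> [h1 h2 _ _]]]] [k' [r' [e [h1' h2' _ _]]]].
have e' : k * a + r = k' * a + r' by lia.
suff : r = r' by lia.
by apply: (@divz_rem_inj a k r k' r' _ _ e'); lia.
Qed.

End SetsAB.

Theorem lemma4p2 (a b c m q j : int) :
  0 < b -> b < a ->
  is_conductor (inS a b) c ->
  2 * c - 1 <= m ->
  0 <= q -> 0 <= j -> j <= a - 1 ->
  (forall x : int,
     Dset2 (inS a b) m (m + q * a + j) x <->
     [\/ Dset (inS a b) m x, setA a b m q j x | setB a b m q j x])
  /\ (forall x : int, Dset (inS a b) m x -> ~ setA a b m q j x)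
  /\ (forall x : int, Dset (inS a b) m x -> ~ setB a b m q j x)
  /\ (forall x : int, setA a b m q j x -> ~ setB a b m q j x).
Proof.
move=> b_gt0 _ cond hm _ j_ge0 j_lta.
have shiftE x : m + q * a + j - x = m - x + (q * a + j) by ring.
have AB x := setAB_iff _ _ m q _ b_gt0 j_ge0 j_lta x.
split; [|split; [|split]].
- move=> x; rewrite Dset2_split; last by move=> y; apply: conductor_reflect cond hm.
  rewrite shiftE -AB.
  by split=> [[|[]] | []];
    [constructor 1 | constructor 2 | constructor 3 | left | right; left | right; right].
- by move=> x [_ Smx] Ax; case: (proj1 (AB x) (or_introl Ax)).
- by move=> x [_ Smx] Bx; case: (proj1 (AB x) (or_intror Bx)).
- exact: setA_setB_disjoint.
Qed.
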